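(* Let $n\ge 1$ and let $f_1,\dots,f_n\in\mathcal{B}_c$. Let $X=(X_1,\dots,X_n)$ be a random vector in $\mathbb{R}^n$ (the $X_i$ possibly dependent) such that $P(|X_i|\ge u)\le f_i(u)$ for all $u\ge 0$ and all $i$. Let $g:\mathbb{R}^n\to\mathbb{R}$ be continuous and $t\in\mathbb{R}$. Suppose there exists $s_t\in(0,1]$ such that $$L(s_t)\in \partial_{SW}\, Q\big(g^{-1}[t,\infty)\big).$$ Then $P(g(X)\ge t)\le n\,s_t$.
   Context: $\mathcal{B}_c$ is the set of functions $f:[0,\infty)\to(0,\infty)$ that are continuous, strictly decreasing, satisfy $f(0)\ge 1$ and $\lim_{u\to\infty}f(u)=0$. For such $f_i$, $L(s)=(f_1^{-1}(s),\dots,f_n^{-1}(s))\in[0,\infty)^n$ for $s\in(0,1]$. $Q:\mathbb{R}^n\to[0,\infty)^n$ is $Q(x_1,\dots,x_n)=(|x_1|,\dots,|x_n|)$. For $x,y\in[0,\infty)^n$, write $x\le' y$ iff $x_i\le y_i$ for all $i$, and $x<'y$ iff $x\le' y$ and $x\ne y$. For a nonempty closed $V\subset[0,\infty)^n$, the southwest boundary is $\partial_{SW}V=\{x\in V:\ \text{there is no } x'\in V \text{ with } x'<'x\}$, i.e. the set of minimal elements of $V$. *)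

From HB Require Import structures.
From mathcomp Require Import all_boot all_order all_algebra.
From mathcomp Require Import all_classical all_reals all_analysis.
Set Implicit Arguments. Unset Strict Implicit. Unset Printing Implicit Defensive.
Import Order.TTheory GRing.Theory Num.Theory.
Import numFieldNormedType.Exports.
Local Open Scope classical_set_scope.
Local Open Scope ring_scope.

(* The class B_c: f : [0,oo) -> (0,oo) continuous, strictly decreasing,
   f 0 >= 1, f u -> 0 as u -> +oo.  Functions are given on R but only
   their restriction to [0,oo) matters. *)
Definition in_Bc {R : realType} (f : R -> R) : Prop :=
  [/\ {within `[0, +oo[, continuous f},
      (forall u, 0 <= u -> 0 < f u),
      (forall u v, 0 <= u -> u < v -> f v < f u),
      1 <= f 0 &
      f @ +oo --> 0].

(* f^{-1}(s): the (unique, for f in B_c and s in (0,1]) u >= 0 with f u = s. *)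
Definition finv {R : realType} (f : R -> R) (s : R) : R :=
  xget 0 [set u | 0 <= u /\ f u = s].

Definition Lvec {R : realType} {n : nat} (f : 'I_n -> R -> R) (s : R) : 'rV[R]_n :=
  \row_i finv (f i) s.

Definition Qabs {R : realType} {n : nat} (x : 'rV[R]_n) : 'rV[R]_n :=
  \row_i `|x 0 i|.

Definition lev {R : realType} {n : nat} (x y : 'rV[R]_n) : Prop :=
  forall i, x 0 i <= y 0 i.

Definition SW {R : realType} {n : nat} (V : set 'rV[R]_n) : set 'rV[R]_n :=
  [set x | V x /\ ~ (exists x', V x' /\ lev x' x /\ x' <> x)].

From Pilot Require Import Defs.
From HB Require Import structures.
From mathcomp Require Import all_boot all_order all_algebra.
From mathcomp Require Import all_classical all_reals all_analysis.
From mathcomp Require Import lra measurable_realfun.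
Import Order.TTheory GRing.Theory Num.Theory.
Import numFieldNormedType.Exports.
Local Open Scope classical_set_scope.
Local Open Scope ring_scope.

(* If |X_i| < f_i^{-1}(s_t) held for every i, then Q(X) would be a point of
   Q(g^{-1}[t, oo)) strictly southwest of L(s_t), contradicting minimality.
   Hence {g(X) >= t} is covered by the events {|X_i| >= f_i^{-1}(s_t)}, each of
   probability at most f_i(f_i^{-1}(s_t)) = s_t, and the union bound gives
   n s_t.  The event {g(X) >= t} is measurable because every open subset of
   R^n is a countable union of boxes with rational centres and radii. *)

(* [Defs.finv] is qualified: plain [finv] is fingraph's inverse of an
   injective function on a finType. *)
Lemma in_Bc_finvP {R : realType} (f : R -> R) (s : R) :
  in_Bc f -> 0 < s -> s <= 1 -> 0 <= Defs.finv f s /\ f (Defs.finv f s) = s.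
Proof.
move=> [fc _ _ f01 f0] s0 s1.
suff : exists u, [set u | 0 <= u /\ f u = s] u by move/(xgetPex 0).
have [u [u0 fus]] : exists u, 0 <= u /\ f u < s.
  have [u [fus u0]] := filter_ex
    (filterI (cvgr_lt _ f0 _ s0) (nbhs_pinfty_ge (num_real (0 : R)))).
  by exists u.
have fc0u : {within `[0, u], continuous f}.
  apply: continuous_subspaceW fc => x /=.
  by rewrite !in_itv /= andbT => /andP[].
have [|c] := IVT u0 fc0u (v := s).
  by rewrite ge_min le_max (ltW fus) orbT (le_trans s1 f01).
by rewrite in_itv /= => /andP[c0 _] fcs; exists c.
Qed.

Lemma SW_exists_le {R : realType} {n : nat} {V : set 'rV[R]_n}
    {l x : 'rV[R]_n} :
  (0 < n)%N -> SW V l -> V x -> exists i, l 0 i <= x 0 i.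
Proof.
move=> n0 [_ l_min] Vx; apply: contrapT => x_lt_l.
have xl i : x 0 i < l 0 i.
  by rewrite ltNge; apply/negP => lx; apply: x_lt_l; exists i.
apply: l_min; exists x; split=> //; split=> [i|xE]; first exact/ltW.
by have := xl (Ordinal n0); rewrite xE ltxx.
Qed.

Lemma content_le_sum_ord {d} {R : realFieldType} {T : ringOfSetsType d}
    (mu : {content set T -> \bar R}) {n : nat} {A : set T} {B : 'I_n -> set T} :
  measurable A -> (forall i, measurable (B i)) -> A `<=` \bigcup_i B i ->
  (mu A <= \sum_(i < n) mu (B i))%E.
Proof.
move=> mA mB AB.
have := content_sub_fsum mu finite_finset (fun i _ => mB i) mA AB.
rewrite (fsbigE (enum 'I_n)) ?enum_uniq //.
- by under eq_bigl do rewrite in_setT; rewrite big_enum.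
- by move=> i _; rewrite mem_enum.
Qed.

Section rational_boxes.
Context {R : realType} {n : nat}.

Definition rat_box (q : 'rV[rat]_n) (r : rat) : set 'rV[R]_n :=
  [set y | forall i, `|y 0 i - ratr (q 0 i)| < ratr r].

Lemma open_rat_box_cover {U : set 'rV[R]_n} {y : 'rV[R]_n} : open U -> U y ->
  exists q r, rat_box q r y /\ rat_box q r `<=` U.
Proof.
move=> oU Uy; have /nbhs_ballP[e e0 yeU] := oU y Uy.
(* A box of radius r < e/2 containing y lies in the e-ball around y. *)
have [r] : exists r : rat, ratr r \in `]0 : R, e / 2[.
  by apply: rat_in_itvoo; move: e0 => /= e0; lra.
rewrite in_itv /= => /andP[r0 re].
have /choice[q qy] i :
    exists q : rat, ratr q \in `]y 0 i - ratr r, y 0 i + ratr r[.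
  by apply: rat_in_itvoo; lra.
exists (\row_i q i), r; split=> [i|z zqr]; rewrite ?mxE.
  move: (qy i); rewrite in_itv /= ltr_distl => /andP[? ?].
  by apply/andP; split; lra.
apply: yeU; split=> // i j; rewrite (ord1 i) -ball_normE /ball_ /=.
move: (zqr j) (qy j); rewrite mxE ltr_distl in_itv /= => /andP[? ?] /andP[? ?].
by rewrite ltr_distl; apply/andP; split; lra.
Qed.

End rational_boxes.

Section measurable_events.
Context {d} {T : measurableType d} {R : realType}.

Lemma measurable_norm_ge (h : {mfun T >-> R}) (c : R) :
  measurable [set w | c <= `|h w|].
Proof.
have := measurableT_comp (@normr_measurable R setT) (measurable_funP h)
  measurableT (measurable_itv `[c, +oo[).
rewrite setTI; congr measurable; apply/seteqP.
by split=> w /=; rewrite in_itv /= andbT.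
Qed.

Lemma measurable_dist_lt (h : {mfun T >-> R}) (c r : R) :
  measurable [set w | `|h w - c| < r].
Proof.
have := measurable_funPTI h (measurable_itv `]c - r, c + r[).
by congr measurable; apply/seteqP; split => w /=; rewrite in_itv /= ltr_distl.
Qed.

Lemma measurable_row_preimage_open n (X : 'I_n -> {mfun T >-> R})
    (U : set 'rV[R]_n) :
  open U -> measurable [set w | U (\row_i X i w)].
Proof.
move=> oU.
have -> : [set w | U (\row_i X i w)] = \bigcup_(p : 'rV[rat]_n * rat)
    [set w | rat_box p.1 p.2 `<=` U /\ rat_box p.1 p.2 (\row_i X i w)].
  apply/seteqP; split=> w /=; last by case=> p _ [pU]; apply: pU.
  by move=> /(open_rat_box_cover oU)[q [r [qw qU]]]; exists (q, r).
apply: countable_bigcupT_measurable => [|[q r] /=]; first exact: countableP.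
have [qU|qU] := pselect (rat_box q r `<=` U); last first.
  by rewrite (_ : [set w | _ /\ _] = set0) //; apply/seteqP; split=> w // [].
rewrite (_ : [set w | _ /\ _] =
    \bigcap_(i in setT) [set w | `|X i w - ratr (q 0 i)| < ratr r]).
  by apply: fin_bigcap_measurable => // i _; exact: measurable_dist_lt.
apply/seteqP; split=> w /=.
  by move=> [_ qw] i _; move: (qw i); rewrite mxE.
by move=> qw; split=> // i; rewrite mxE; apply: qw.
Qed.

Lemma measurable_row_superlevel n (X : 'I_n -> {mfun T >-> R})
    (g : 'rV[R]_n -> R) (t : R) :
  continuous g -> measurable [set w | t <= g (\row_i X i w)].
Proof.
move=> gc; rewrite (_ : [set w | _] =
    ~` [set w | (g @^-1` [set y | y < t]) (\row_i X i w)]).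
  apply/measurableC/measurable_row_preimage_open/open_comp; last exact: open_lt.
  by move=> y _; exact: gc.
by apply/seteqP; split=> w; rewrite /= leNgt => /negP.
Qed.

End measurable_events.

Theorem theorem1 (R : realType) (d : measure_display) (T : measurableType d)
  (P : probability T R) (n : nat) (hn : (0 < n)%N)
  (f : 'I_n -> R -> R) (hf : forall i, in_Bc (f i))
  (X : 'I_n -> {RV P >-> R})
  (htail : forall i (u : R), 0 <= u ->
     (P [set w | (u <= `|X i w|)%R] <= (f i u)%:E)%E)
  (g : 'rV[R]_n -> R) (hg : continuous g) (t : R)
  (st : R) (hst0 : 0 < st) (hst1 : st <= 1)
  (hSW : SW (Qabs @` [set x | t <= g x]) (Lvec f st)) :
  (P [set w | (t <= g (\row_i X i w))%R] <= (n%:R * st)%:E)%E.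
Proof.
set l := Lvec f st.
have fl i : 0 <= l 0 i /\ f i (l 0 i) = st by rewrite mxE; exact: in_Bc_finvP.
set A := [set w | t <= g (\row_i X i w)].
have mA : measurable A by exact: measurable_row_superlevel.
have AB : A `<=` \bigcup_i [set w | l 0 i <= `|X i w|].
  move=> w Aw; have /(SW_exists_le hn hSW)[i] :
      (Qabs @` [set x | t <= g x]) (Qabs (\row_i X i w)).
    by exists (\row_i X i w).
  by move=> li; exists i => //; move: li; rewrite !mxE.
apply: (le_trans (content_le_sum_ord P mA _ AB)) => [i|].
  exact: measurable_norm_ge.
apply: (@le_trans _ _ (\sum_(i < n) st%:E)%E).
  by apply: lee_sum => i _; case: (fl i) => l0 <-; exact: htail.
by rewrite sumEFin sumr_const card_ord mulr_natl.
Qed.
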